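(* For every positive integer $n$, \[ e^n=\sum_{k=0}^{n-1}\frac{n^k}{k!}+\frac{n^{n-1}}{(n-1)!}\left(1+n+\mathop{\mathrm{K}}_{m=1}^{\infty}\left(\frac{-n(m+n-1)}{m+2n+1}\right)\right), \] where in particular the continued fraction converges.
   Context: For sequences $(a_m)_{m\ge1}$, $(b_m)_{m\ge1}$ of complex numbers, $\mathop{\mathrm{K}}_{m=1}^{\infty}\left(\frac{a_m}{b_m}\right)$ denotes the continued fraction $\cfrac{a_1}{b_1+\cfrac{a_2}{b_2+\cfrac{a_3}{b_3+\cdots}}}$, whose value is the limit as $k\to\infty$ of its $k$-th approximants $\cfrac{a_1}{b_1+\cfrac{a_2}{\ddots+\cfrac{a_k}{b_k}}}$ (the $0$-th approximant being $0$). Here $a_m=-n(m+n-1)$ and $b_m=m+2n+1$. *)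

From Stdlib Require Import Reals Arith Factorial.
Open Scope R_scope.

Fixpoint cf_from (a b : nat -> R) (m k : nat) : R :=
  match k with
  | O => 0
  | S k' => a m / (b m + cf_from a b (S m) k')
  end.

(* k-th approximant of K_{m>=1} (a_m / b_m); the 0-th approximant is 0. *)
Definition cf_approx (a b : nat -> R) (k : nat) : R := cf_from a b 1 k.

Definition cf_a (n : nat) (m : nat) : R := - INR n * INR (m + n - 1).
Definition cf_b (n : nat) (m : nat) : R := INR (m + 2 * n + 1).

(* Let r_N = sum_j x^j / (N + j)! ([exp_tail x N]) be the scaled Taylor
   remainder of e^x, so that r_N = 1/N! + x r_(N+1) and
   e^x = sum_(k <= N) x^k / k! + x^(N+1) r_(N+1).
   For x = n, w_m = 1/(n+m-1)! - m r_(n+m) ([exp_cf_solution n m]) solves the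
   three-term recurrence w_m = b_(m+1) w_(m+1) + a_(m+2) w_(m+2) of the continued
   fraction, and it is the minimal solution: all tails of the continued fraction
   lie in [-n, 0], which makes the k-th approximant differ from a_1 w_1 / w_0 by at
   most n^k |a_(k+1) w_(k+1)| / w_0 = O(n^k / k!).  So the continued fraction
   converges to a_1 w_1 / w_0 = -n + n^2 (n-1)! r_(n+1), and the Taylor identity
   with N = n turns this into the claimed formula. *)

From Stdlib Require Import Reals Factorial Lra Lia.
From Coquelicot Require Import Coquelicot.
Open Scope R_scope.

Definition exp_tail (x : R) (N : nat) : R :=
  Series (fun j => x ^ j / INR (fact (N + j))).

Lemma is_series_exp (x : R) : is_series (fun k => x ^ k / INR (fact k)) (exp x).
Proof.
  apply (is_series_ext (fun k => / INR (fact k) * x ^ k)).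
  - intros k; apply Rmult_comm.
  - apply is_pseries_R, is_exp_Reals.
Qed.

Lemma fact_mul_le_fact_add (N j : nat) : (fact N * fact j <= fact (N + j))%nat.
Proof.
  induction j as [|j IH].
  - rewrite Nat.add_0_r; simpl; lia.
  - rewrite Nat.add_succ_r; simpl fact; nia.
Qed.

Lemma add_mul_fact_le (n k : nat) : (1 <= n)%nat -> ((n + k) * fact k <= fact (n + k))%nat.
Proof.
  intros hn. destruct n as [|n']; [lia |].
  rewrite Nat.add_succ_l; cbn [fact].
  apply Nat.mul_le_mono_l, fact_le; lia.
Qed.

Lemma exp_tail_term_le (x : R) (N j : nat) : 0 <= x ->
  0 <= x ^ j / INR (fact (N + j)) <= x ^ j / INR (fact j) * / INR (fact N).
Proof.
  intros Hx.
  assert (HN := INR_fact_lt_0 N); assert (Hj := INR_fact_lt_0 j).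
  assert (Hprod : INR (fact N) * INR (fact j) <= INR (fact (N + j))).
  { rewrite <- mult_INR; apply le_INR, fact_mul_le_fact_add. }
  assert (Hxj : 0 <= x ^ j) by (apply pow_le; lra).
  split.
  - apply Rmult_le_pos; [lra | left; apply Rinv_0_lt_compat, INR_fact_lt_0].
  - replace (x ^ j / INR (fact j) * / INR (fact N))
      with (x ^ j / (INR (fact N) * INR (fact j))) by (field; lra).
    apply Rmult_le_compat_l; [lra|].
    apply Rinv_le_contravar; [nra | exact Hprod].
Qed.

Lemma ex_series_exp_tail (x : R) (N : nat) :
  ex_series (fun j => x ^ j / INR (fact (N + j))).
Proof.
  apply (@ex_series_le R_AbsRing R_CompleteNormedModule _
           (fun j => Rabs x ^ j / INR (fact j) * / INR (fact N))).
  - intros j. change norm with Rabs.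
    replace (Rabs (x ^ j / INR (fact (N + j)))) with (Rabs x ^ j / INR (fact (N + j))).
    + apply exp_tail_term_le, Rabs_pos.
    + unfold Rdiv.
      rewrite Rabs_mult, Rabs_inv, RPow_abs, (Rabs_pos_eq (INR _)) by apply pos_INR.
      reflexivity.
  - apply ex_series_scal_r. eexists; apply is_series_exp.
Qed.

Lemma exp_tail_0 (x : R) : exp_tail x 0 = exp x.
Proof. apply is_series_unique, is_series_exp. Qed.

Lemma exp_tail_S (x : R) (N : nat) :
  exp_tail x N = / INR (fact N) + x * exp_tail x (S N).
Proof.
  unfold exp_tail. rewrite Series_incr_1 by apply ex_series_exp_tail.
  rewrite <- Series_scal_l, Nat.add_0_r, pow_O.
  apply f_equal2; [unfold Rdiv; ring |].
  apply Series_ext; intros j.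
  rewrite Nat.add_succ_r, Nat.add_succ_l; simpl pow; unfold Rdiv; ring.
Qed.

Lemma exp_tail_bounds (x : R) (N : nat) : 0 <= x ->
  0 <= exp_tail x N <= exp x / INR (fact N).
Proof.
  intros Hx. unfold exp_tail. set (t := fun j => x ^ j / INR (fact (N + j))).
  split.
  - rewrite <- (Rmult_0_l (Series t)), <- Series_scal_l.
    apply Series_le; [|apply ex_series_exp_tail].
    intros j; rewrite Rmult_0_l; split; [lra | apply (exp_tail_term_le x N j Hx)].
  - rewrite <- exp_tail_0; unfold exp_tail, Rdiv; rewrite <- Series_scal_r.
    apply Series_le; [intros j; apply exp_tail_term_le, Hx |].
    apply ex_series_scal_r, ex_series_exp_tail.
Qed.

Lemma exp_taylor_tail (x : R) (N : nat) :
  exp x = sum_f_R0 (fun k => x ^ k / INR (fact k)) N + x ^ S N * exp_tail x (S N).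
Proof.
  induction N as [|N IH].
  - rewrite <- exp_tail_0, exp_tail_S; simpl; field.
  - rewrite IH, (exp_tail_S x (S N)), tech5; cbn [pow]; unfold Rdiv; ring.
Qed.

Section ThreeTermRecurrence.

Variables (a b w : nat -> R) (c : R).
Hypothesis w_rec : forall m, w m = b (S m) * w (S m) + a (S (S m)) * w (S (S m)).
Hypothesis cf_denom_neq0 : forall m k, b m + cf_from a b (S m) k <> 0.
Hypothesis cf_from_abs_le : forall m k, Rabs (cf_from a b m k) <= c.

Lemma cf_from_error_S (m k : nat) :
  cf_from a b (S m) (S k) * w m - a (S m) * w (S m) =
  - cf_from a b (S m) (S k) *
    (cf_from a b (S (S m)) k * w (S m) - a (S (S m)) * w (S (S m))).
Proof.
  cbn [cf_from]. rewrite (w_rec m). field. apply cf_denom_neq0.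
Qed.

Lemma cf_from_error_le (k m : nat) :
  Rabs (cf_from a b (S m) k * w m - a (S m) * w (S m)) <=
  c ^ k * Rabs (a (S (m + k)) * w (S (m + k))).
Proof.
  induction k as [|k IH] in m |- *.
  - rewrite Nat.add_0_r, <- Rabs_Ropp. simpl; rewrite Rmult_1_l; right; f_equal; ring.
  - rewrite cf_from_error_S, Rabs_mult, Rabs_Ropp, <- Nat.add_succ_comm.
    simpl pow; rewrite Rmult_assoc.
    apply Rmult_le_compat; [apply Rabs_pos | apply Rabs_pos | apply cf_from_abs_le | apply IH].
Qed.

Lemma cf_approx_cv_ratio :
  w 0%nat <> 0 ->
  is_lim_seq (fun k => c ^ k * Rabs (a (S k) * w (S k))) 0 ->
  Un_cv (cf_approx a b) (a 1%nat * w 1%nat / w 0%nat).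
Proof.
  intros Hw0 Hlim. set (L := a 1%nat * w 1%nat / w 0%nat).
  assert (Herr : is_lim_seq (fun k => cf_approx a b k - L) 0).
  { apply is_lim_seq_abs_0.
    apply (is_lim_seq_le_le (fun _ => 0) _
             (fun k => c ^ k * Rabs (a (S k) * w (S k)) / Rabs (w 0%nat)));
      [| apply is_lim_seq_const |].
    - intros k; split; [apply Rabs_pos |].
      replace (cf_approx a b k - L)
        with ((cf_from a b 1 k * w 0%nat - a 1%nat * w 1%nat) / w 0%nat)
        by (unfold cf_approx, L; field; exact Hw0).
      rewrite Rabs_div by exact Hw0.
      apply Rmult_le_compat_r; [left; apply Rinv_0_lt_compat, Rabs_pos_lt, Hw0 |].
      apply (cf_from_error_le k 0).
    - replace (Finite 0) with (Rbar_mult 0 (/ Rabs (w 0%nat))) by (simpl; f_equal; ring).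
      apply is_lim_seq_scal_r, Hlim. }
  apply is_lim_seq_Reals.
  replace L with (0 + L) by ring.
  apply (is_lim_seq_ext (fun k => (cf_approx a b k - L) + L)); [intros k; ring |].
  apply is_lim_seq_plus'; [exact Herr | apply is_lim_seq_const].
Qed.

End ThreeTermRecurrence.

Lemma cf_a_succ (n m : nat) : cf_a n (S m) = - INR n * (INR m + INR n).
Proof. unfold cf_a. rewrite <- plus_INR. do 2 f_equal. lia. Qed.

Lemma cf_b_eq (n m : nat) : cf_b n m = INR m + 2 * INR n + 1.
Proof. unfold cf_b. rewrite !plus_INR, mult_INR. reflexivity. Qed.

Lemma cf_b_add_ge (n m : nat) (e : R) :
  - INR n <= e -> INR m + INR n + 1 <= cf_b n m + e.
Proof. rewrite cf_b_eq. lra. Qed.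

Lemma cf_from_bounds (n m k : nat) :
  - INR n <= cf_from (cf_a n) (cf_b n) m k <= 0.
Proof.
  assert (Hn := pos_INR n).
  induction k as [|k IH] in m |- *; [simpl; lra |].
  cbn [cf_from]. destruct (IH (S m)) as [He _].
  assert (Hd := cf_b_add_ge n m _ He).
  set (d := cf_b n m + _) in *.
  assert (Hs : 0 <= INR (m + n - 1) <= INR m + INR n).
  { split; [apply pos_INR |]. rewrite <- plus_INR. apply le_INR; lia. }
  assert (Hm := pos_INR m).
  unfold cf_a. split.
  - apply (Rmult_le_reg_r d); [lra |].
    unfold Rdiv; rewrite Rmult_assoc, Rinv_l by lra. nra.
  - apply (Rmult_le_reg_r d); [lra |].
    unfold Rdiv; rewrite Rmult_assoc, Rinv_l by lra. nra.
Qed.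

Lemma cf_denom_pos (n m k : nat) : 0 < cf_b n m + cf_from (cf_a n) (cf_b n) (S m) k.
Proof.
  assert (Hd := cf_b_add_ge n m _ (proj1 (cf_from_bounds n (S m) k))).
  assert (Hm := pos_INR m). assert (Hn := pos_INR n). lra.
Qed.

Lemma cf_from_abs_le_INR (n m k : nat) : Rabs (cf_from (cf_a n) (cf_b n) m k) <= INR n.
Proof.
  destruct (cf_from_bounds n m k) as [Hlo Hhi].
  rewrite Rabs_left1 by exact Hhi. lra.
Qed.

Definition exp_cf_solution (n m : nat) : R :=
  / INR (fact (n + m - 1)) - INR m * exp_tail (INR n) (n + m).

Lemma exp_cf_solution_rec (n m : nat) : (1 <= n)%nat ->
  exp_cf_solution n m =
  cf_b n (S m) * exp_cf_solution n (S m) + cf_a n (S (S m)) * exp_cf_solution n (S (S m)).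
Proof.
  intros hn. rewrite cf_b_eq, cf_a_succ.
  destruct n as [|n']; [lia |]. unfold exp_cf_solution.
  replace (S n' + m - 1)%nat with (n' + m)%nat by lia.
  replace (S n' + S m - 1)%nat with (S (n' + m)) by lia.
  replace (S n' + S (S m) - 1)%nat with (S (S (n' + m))) by lia.
  replace (S n' + m)%nat with (S (n' + m)) by lia.
  replace (S n' + S m)%nat with (S (S (n' + m))) by lia.
  replace (S n' + S (S m))%nat with (S (S (S (n' + m)))) by lia.
  rewrite (exp_tail_S _ (S (n' + m))), (exp_tail_S _ (S (S (n' + m)))).
  cbn [fact]. rewrite !mult_INR, !S_INR, !plus_INR.
  assert (HF := INR_fact_lt_0 (n' + m)). assert (Hn := pos_INR n'). assert (Hm := pos_INR m).
  field. repeat split; nra.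
Qed.

Lemma exp_cf_solution_succ_abs_le (n k : nat) : (1 <= n)%nat ->
  Rabs (exp_cf_solution n (S k)) <= (1 + exp (INR n)) / INR (fact (n + k)).
Proof.
  intros hn. unfold exp_cf_solution.
  replace (n + S k - 1)%nat with (n + k)%nat by lia.
  replace (n + S k)%nat with (S (n + k)) by lia.
  set (N := (n + k)%nat).
  destruct (exp_tail_bounds (INR n) (S N) (pos_INR n)) as [Ht0 Ht1].
  set (t := exp_tail _ _) in *.
  assert (Hst : 0 <= INR (S k) * t <= exp (INR n) / INR (fact N)).
  { split; [apply Rmult_le_pos; [apply pos_INR | exact Ht0] |].
    apply Rle_trans with (INR (S N) * t).
    - apply Rmult_le_compat_r; [exact Ht0 | apply le_INR; lia].
    - replace (exp (INR n) / INR (fact N)) with (INR (S N) * (exp (INR n) / INR (fact (S N)))).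
      + apply Rmult_le_compat_l; [apply pos_INR | exact Ht1].
      + cbn [fact]; rewrite mult_INR; field.
        split; [apply INR_fact_neq_0 | apply not_0_INR; lia]. }
  assert (Hinv : 0 < / INR (fact N)) by apply Rinv_0_lt_compat, INR_fact_lt_0.
  replace ((1 + exp (INR n)) / INR (fact N))
    with (/ INR (fact N) + exp (INR n) / INR (fact N)) by (field; apply INR_fact_neq_0).
  unfold Rabs; destruct (Rcase_abs _); lra.
Qed.

Lemma exp_cf_term_abs_le (n k : nat) : (1 <= n)%nat ->
  Rabs (cf_a n (S k) * exp_cf_solution n (S k)) <= INR n * (1 + exp (INR n)) / INR (fact k).
Proof.
  intros hn.
  assert (Hfact : INR (n + k) * INR (fact k) <= INR (fact (n + k))).
  { rewrite <- mult_INR; apply le_INR, add_mul_fact_le, hn. }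
  assert (Hk := INR_fact_lt_0 k). assert (HF := INR_fact_lt_0 (n + k)).
  assert (He := exp_pos (INR n)). assert (Hn := pos_INR n).
  rewrite Rabs_mult, cf_a_succ, Rabs_mult, Rabs_Ropp, <- plus_INR, Nat.add_comm,
    !Rabs_pos_eq by apply pos_INR.
  apply Rle_trans with (INR n * INR (n + k) * ((1 + exp (INR n)) / INR (fact (n + k)))).
  - apply Rmult_le_compat_l; [apply Rmult_le_pos; apply pos_INR |].
    apply exp_cf_solution_succ_abs_le, hn.
  - set (F := INR (fact (n + k))) in *. set (Fk := INR (fact k)) in *.
    replace (INR n * INR (n + k) * ((1 + exp (INR n)) / F))
      with (INR n * (1 + exp (INR n)) * (INR (n + k) / F)) by (unfold Rdiv; ring).
    unfold Rdiv at 2; apply Rmult_le_compat_l; [apply Rmult_le_pos; lra |].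
    apply (Rmult_le_reg_r (F * Fk)); [apply Rmult_lt_0_compat; lra |].
    replace (INR (n + k) / F * (F * Fk)) with (INR (n + k) * Fk) by (field; lra).
    replace (/ Fk * (F * Fk)) with F by (field; lra).
    exact Hfact.
Qed.

Lemma exp_cf_error_cv (n : nat) : (1 <= n)%nat ->
  is_lim_seq (fun k => INR n ^ k * Rabs (cf_a n (S k) * exp_cf_solution n (S k))) 0.
Proof.
  intros hn. set (C := INR n * (1 + exp (INR n))).
  apply (is_lim_seq_le_le (fun _ => 0) _ (fun k => C * (INR n ^ k / INR (fact k)))).
  - intros k. assert (Hx := pow_le _ k (pos_INR n)). split.
    + apply Rmult_le_pos; [exact Hx | apply Rabs_pos].
    + replace (C * (INR n ^ k / INR (fact k))) with (INR n ^ k * (C / INR (fact k)))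
        by (unfold Rdiv; ring).
      apply Rmult_le_compat_l; [exact Hx | apply exp_cf_term_abs_le, hn].
  - apply is_lim_seq_const.
  - replace (Finite 0) with (Rbar_mult C 0) by (simpl; f_equal; ring).
    apply is_lim_seq_scal_l, is_lim_seq_Reals, cv_speed_pow_fact.
Qed.

Lemma exp_cf_solution_0 (n : nat) : exp_cf_solution n 0 = / INR (fact (n - 1)).
Proof. unfold exp_cf_solution. rewrite Nat.add_0_r, INR_0. ring. Qed.

Lemma exp_taylor_cf_ratio (n : nat) : (1 <= n)%nat ->
  exp (INR n) =
    sum_f_R0 (fun k => INR n ^ k / INR (fact k)) (n - 1)
    + INR n ^ (n - 1) / INR (fact (n - 1)) *
      (1 + INR n + cf_a n 1 * exp_cf_solution n 1 / exp_cf_solution n 0).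
Proof.
  intros hn. rewrite exp_cf_solution_0. unfold exp_cf_solution.
  destruct n as [|n']; [lia |].
  replace (S n' - 1)%nat with n' by lia.
  replace (S n' + 1 - 1)%nat with (S n') by lia.
  replace (S n' + 1)%nat with (S (S n')) by lia.
  rewrite (exp_taylor_tail _ (S n')), tech5, cf_a_succ, INR_0, INR_1.
  cbn [fact pow]. rewrite mult_INR.
  assert (HF := INR_fact_neq_0 n'). assert (HS : INR (S n') <> 0) by (apply not_0_INR; lia).
  field. split; assumption.
Qed.

Theorem theorem2p1 (n : nat) (hn : (1 <= n)%nat) :
  exists L : R,
    Un_cv (cf_approx (cf_a n) (cf_b n)) L /\
    exp (INR n) =
      sum_f_R0 (fun k => INR n ^ k / INR (fact k)) (n - 1)
      + INR n ^ (n - 1) / INR (fact (n - 1)) * (1 + INR n + L).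
Proof.
  exists (cf_a n 1 * exp_cf_solution n 1 / exp_cf_solution n 0).
  split; [| exact (exp_taylor_cf_ratio n hn)].
  apply (cf_approx_cv_ratio _ _ _ (INR n)).
  - intros m; apply exp_cf_solution_rec, hn.
  - intros m k; apply Rgt_not_eq, cf_denom_pos.
  - apply cf_from_abs_le_INR.
  - rewrite exp_cf_solution_0; apply Rinv_neq_0_compat, INR_fact_neq_0.
  - apply exp_cf_error_cv, hn.
Qed.
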